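(* In the Min Sum Set Cover case (all box values in $\{0,\infty\}$), there is a scenario-independent rounding which, given any doubly stochastic $\overline{x}\in[0,1]^{n\times n}$, produces a random order of opening the boxes such that for every scenario $s$ the expected number of boxes opened until a box of value $0$ in $s$ is opened is at most $4\,\overline{g}^s(\overline{x})$; i.e. it is a $4$-approximation.
   Context: There are $n$ boxes $\mathcal{B}=\{1,\dots,n\}$ and time steps $\mathcal{T}=\{1,\dots,n\}$. A scenario $s$ is a vector $c^s\in\{0,\infty\}^n$ with at least one zero entry. For doubly stochastic $x$, $\overline{g}^s(x)=\min_{z\ge0}\sum_{i\in\mathcal{B},t\in\mathcal{T}}(t+c^s_i)z_{it}$ subject to $\sum_{i,t}z_{it}=1$ and $z_{it}\le x_{it}$ for all $i,t$ (with $z_{it}=0$ forced wherever $c^s_i=\infty$ in a finite solution). *)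

From HB Require Import structures.
From mathcomp Require Import all_boot all_order all_algebra all_fingroup.
From mathcomp Require Import boolp classical_sets reals.
Set Implicit Arguments. Unset Strict Implicit. Unset Printing Implicit Defensive.
Import Order.TTheory GRing.Theory Num.Theory.
Local Open Scope ring_scope.
Local Open Scope classical_set_scope.

(* Boxes and time steps are both indexed by 'I_n; time step t : 'I_n stands
   for the time val t + 1 in {1,...,n}. *)

Section MSSC.
Variable R : realType.
Variable n : nat.

Definition doubly_stochastic (x : 'M[R]_n) : Prop :=
  (forall i t, 0 <= x i t) /\
  (forall i, \sum_(t < n) x i t = 1) /\
  (forall t, \sum_(i < n) x i t = 1).

(* A Min-Sum-Set-Cover scenario c^s in {0,oo}^n is encoded by the set S of
   boxes i with c^s_i = 0 (S must be nonempty). *)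
Definition lp_feasible (x : 'M[R]_n) (S : {set 'I_n}) (z : 'M[R]_n) : Prop :=
  (forall i t, 0 <= z i t) /\
  (\sum_(i < n) \sum_(t < n) z i t = 1) /\
  (forall i t, z i t <= x i t) /\
  (forall i t, i \notin S -> z i t = 0).

(* Objective sum_{i,t} (t + c_i) z_{it} restricted to finite-cost support,
   where c_i = 0 on the support. *)
Definition lp_obj (z : 'M[R]_n) : R :=
  \sum_(i < n) \sum_(t < n) (t.+1)%:R * z i t.

Definition gbar (x : 'M[R]_n) (S : {set 'I_n}) : R :=
  inf [set lp_obj z | z in [set z | lp_feasible x S z]].

(* A random order of opening the boxes: a probability distribution over
   permutations; sigma t is the box opened at time step t. *)
Definition is_distr (p : {ffun {perm 'I_n} -> R}) : Prop :=
  (forall s, 0 <= p s) /\ \sum_(s : {perm 'I_n}) p s = 1.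

Definition open_cost (sigma : {perm 'I_n}) (S : {set 'I_n}) : nat :=
  \big[minn/n.+1]_(t < n | sigma t \in S) t.+1.

Definition expected_cost (p : {ffun {perm 'I_n} -> R}) (S : {set 'I_n}) : R :=
  \sum_(s : {perm 'I_n}) p s * (open_cost s S)%:R.

End MSSC.

From HB Require Import structures.
From mathcomp Require Import all_boot all_order all_algebra all_fingroup.
From mathcomp Require Import boolp reals.
From mathcomp Require Import zify ring lra.
Import Order.TTheory GRing.Theory Num.Theory.
Local Open Scope ring_scope.

Set Implicit Arguments. Unset Strict Implicit. Unset Printing Implicit Defensive.

(* Open the boxes one at a time: after [k] boxes, draw the next one among the
   unopened boxes with probability proportional to the mass [x] gives it in
   the first [k/2] time steps.  Let [h q = min(1, mass of S before time q)].
   While no box of [S] is open, the next box lies in [S] with probability at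
   least [h (k/2) / (k/2) >= 2 h (k/2) / (k+1)], so the potential
   [2 k + 2 sum_(k <= j < n) (1 - h (j/2))] bounds the expected cost from the
   state with [k] boxes open.  At [k = 0] this is at most
   [4 sum_(s < n) (1 - h s)], a lower bound on the LP value; the halving
   [k/2] accounts for one of the two factors 2. *)

Lemma sumr_halfn (V : nmodType) (f : nat -> V) m :
  \sum_(0 <= j < m.*2) f j./2 = (\sum_(0 <= s < m) f s) *+ 2.
Proof.
elim: m => [|m IH]; first by rewrite !big_geq // mul0rn.
rewrite doubleS !big_nat_recr //= IH uphalf_double doubleK.
by rewrite !mulr2n !addrA (addrAC _ (f m)).
Qed.

Lemma sumr_tails (V : nmodType) n (f : 'I_n -> V) :
  \sum_(t < n) f t *+ t.+1 = \sum_(s < n) \sum_(t < n | (s <= t)%N) f t.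
Proof.
under [RHS]eq_bigr do rewrite big_mkcond.
rewrite [RHS]exchange_big /=; apply: eq_bigr => t _.
rewrite -big_mkcond /= -(big_ord_widen _ (fun _ => f t) (ltn_ord t)).
by rewrite sumr_const card_ord.
Qed.

Section OpeningOrder.
Variable n : nat.

(* The junk value [1] is taken when [o] does not enumerate ['I_n]. *)
Definition perm_of_seq (o : seq 'I_n) : {perm 'I_n} :=
  odflt 1%g [pick s : {perm 'I_n} | [forall t, s t == nth t o t]].

Lemma perm_of_seqE o : uniq o -> size o = n ->
  forall t, perm_of_seq o t = nth t o t.
Proof.
move=> uo so.
have nth_inj : injective (fun t : 'I_n => nth t o t).
  move=> t1 t2 /= E; apply/val_inj/eqP.
  have lt1 : (t1 < size o)%N by rewrite so ltn_ord.
  have lt2 : (t2 < size o)%N by rewrite so ltn_ord.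
  by rewrite -(nth_uniq t1 lt1 lt2 uo) E (set_nth_default t1 t2).
rewrite /perm_of_seq; case: pickP => [s /forallP sE t | none]; first exact/eqP.
by have /forallP := negbT (none (perm nth_inj)); case=> t; rewrite permE eqxx.
Qed.

Lemma open_cost_le (s : {perm 'I_n}) S : (open_cost s S <= n.+1)%N.
Proof. by rewrite /open_cost -minEnat -leEnat bigmin_le_id. Qed.

Lemma open_cost_perm_of_seq o (S : {set 'I_n}) :
  uniq o -> size o = n -> has [in S] o ->
  (open_cost (perm_of_seq o) S <= (find [in S] o).+1)%N.
Proof.
move=> uo so hit; have lt : (find [in S] o < n)%N by move: hit; rewrite has_find so.
pose t0 := Ordinal lt.
have t0_hit : perm_of_seq o t0 \in S by rewrite perm_of_seqE //; apply: nth_find.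
rewrite /open_cost -minEnat -leEnat.
exact: (bigmin_le_cond _ (P := fun t => perm_of_seq o t \in S) _ t0_hit).
Qed.

End OpeningOrder.

Section SequentialSampling.
Variables (R : realType) (n : nat).
Variable w : seq 'I_n -> 'I_n -> R.
Hypothesis w_ge0 : forall o i, 0 <= w o i.
Hypothesis w_sum1 : forall o, (size o < n)%N -> \sum_i w o i = 1.
Hypothesis w_opened : forall (o : seq 'I_n) i, i \in o -> w o i = 0.

Fixpoint sampled_order (r : nat) (o : seq 'I_n) : {ffun {perm 'I_n} -> R} :=
  if r is r'.+1 then [ffun s => \sum_i w o i * sampled_order r' (rcons o i) s]
  else [ffun s => (s == perm_of_seq o)%:R].

Lemma sampled_order_ge0 r o s : 0 <= sampled_order r o s.
Proof.
elim: r o => [|r IH] o /=; rewrite ffunE; first by rewrite ler0n.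
by apply: sumr_ge0 => i _; rewrite mulr_ge0.
Qed.

Lemma sampled_order_sum1 r o :
  (size o + r = n)%N -> \sum_s sampled_order r o s = 1.
Proof.
elim: r o => [|r IH] o /= so; under eq_bigr do rewrite ffunE.
  by rewrite (bigD1 (perm_of_seq o)) //= eqxx big1 ?addr0 // => s /negbTE ->.
rewrite exchange_big /= -[RHS](w_sum1 (o := o)); last by lia.
apply: eq_bigr => i _.
by rewrite -mulr_sumr IH ?mulr1 // size_rcons addSnnS.
Qed.

Lemma expected_cost_sampled_order0 o S :
  expected_cost (sampled_order 0 o) S = (open_cost (perm_of_seq o) S)%:R.
Proof.
rewrite /expected_cost (bigD1 (perm_of_seq o)) //= ffunE eqxx mul1r.
by rewrite big1 ?addr0 // => s /negbTE; rewrite ffunE => ->; rewrite mul0r.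
Qed.

Lemma expected_cost_sampled_orderS_le r o S (B : 'I_n -> R) :
  (forall i, i \notin o -> expected_cost (sampled_order r (rcons o i)) S <= B i) ->
  expected_cost (sampled_order r.+1 o) S <= \sum_i w o i * B i.
Proof.
move=> leB; rewrite /expected_cost.
under eq_bigr do rewrite ffunE mulr_suml.
rewrite exchange_big /=; apply: ler_sum => i _.
have [/w_opened -> | io] := boolP (i \in o).
  by rewrite mul0r big1 // => s _; rewrite !mul0r.
under eq_bigr do rewrite -mulrA.
by rewrite -mulr_sumr ler_wpM2l ?leB.
Qed.

Lemma expected_cost_sampled_order_hit r (o : seq 'I_n) (S : {set 'I_n}) :
  uniq o -> (size o + r = n)%N -> has [in S] o ->
  expected_cost (sampled_order r o) S <= (find [in S] o).+1%:R.
Proof.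
elim: r o => [|r IH] o uo so hit.
  rewrite addn0 in so.
  by rewrite expected_cost_sampled_order0 ler_nat open_cost_perm_of_seq.
pose B (_ : 'I_n) : R := (find [in S] o).+1%:R.
apply: (le_trans (expected_cost_sampled_orderS_le (B := B) _)).
  move=> i io; have := IH (rcons o i).
  rewrite rcons_uniq io uo size_rcons -cats1 has_cat find_cat hit.
  by apply; rewrite // addSnnS.
by rewrite -mulr_suml w_sum1 ?mul1r //; lia.
Qed.

End SequentialSampling.

Section Rounding.
Variables (R : realType) (n : nat) (x : 'M[R]_n).
Hypothesis x_ge0 : forall i t, 0 <= x i t.
Hypothesis x_row1 : forall i, \sum_t x i t = 1.
Hypothesis x_col1 : forall t, \sum_i x i t = 1.

Definition prefix_mass (i : 'I_n) (q : nat) : R := \sum_(t < n | (t < q)%N) x i t.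

Definition unopened_mass (o : seq 'I_n) : R :=
  \sum_(i | i \notin o) prefix_mass i (size o)./2.

Definition rounding_weight (o : seq 'I_n) (i : 'I_n) : R :=
  if i \in o then 0
  else if 0 < unopened_mass o then prefix_mass i (size o)./2 / unopened_mass o
  else #|[predC o]|%:R^-1.

Lemma prefix_mass_ge0 i q : 0 <= prefix_mass i q.
Proof. exact: sumr_ge0. Qed.

Lemma sum_prefix_mass q : (q <= n)%N -> \sum_i prefix_mass i q = q%:R.
Proof.
move=> le_qn; rewrite /prefix_mass exchange_big /=.
under eq_bigr do rewrite x_col1.
by rewrite -(big_ord_widen _ (fun _ => 1) le_qn) sumr_const card_ord.
Qed.

Lemma unopened_mass_le (o : seq 'I_n) :
  (size o < n)%N -> unopened_mass o <= (size o)./2%:R.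
Proof.
move=> lt_on; rewrite -sum_prefix_mass; last by rewrite -divn2; lia.
rewrite [X in _ <= X](bigID (fun i => i \notin o)) /= lerDl.
by apply: sumr_ge0 => i _; apply: prefix_mass_ge0.
Qed.

Lemma rounding_weight_ge0 o i : 0 <= rounding_weight o i.
Proof.
rewrite /rounding_weight; case: (i \in o) => //; case: ifP => [Z_gt0 | _].
  by rewrite divr_ge0 ?prefix_mass_ge0 ?ltW.
by rewrite invr_ge0 ler0n.
Qed.

Lemma rounding_weight_opened o i : i \in o -> rounding_weight o i = 0.
Proof. by rewrite /rounding_weight => ->. Qed.

Lemma rounding_weight_sum1 (o : seq 'I_n) :
  (size o < n)%N -> \sum_i rounding_weight o i = 1.
Proof.
move=> lt_on; rewrite (bigID (fun i => i \in o)) /= big1 ?add0r; last first.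
  by move=> i; apply: rounding_weight_opened.
under eq_bigr => i /negbTE io do rewrite /rounding_weight io.
case: (boolP (0 < unopened_mass o)) => [Z_gt0 | _].
  by rewrite -mulr_suml divff ?lt0r_neq0.
have unopened_gt0 : (0 < #|[predC o]|)%N.
  have cardCo : (#|o| + #|[predC o]| = n)%N by rewrite cardC card_ord.
  by rewrite -(ltn_add2l #|o|) addn0 cardCo (leq_ltn_trans (card_size o)).
rewrite sumr_const -[_ *+ _]mulr_natr.
rewrite (eq_card (B := [predC o])) => [|i]; last by rewrite !inE.
by rewrite mulVf // pnatr_eq0 -lt0n.
Qed.

Variable S : {set 'I_n}.

Definition set_mass (q : nat) : R := \sum_(i in S) prefix_mass i q.
Definition capped_mass (q : nat) : R := Num.min 1 (set_mass q).
Definition potential (k : nat) : R := 2 * \sum_(k <= j < n) (1 - capped_mass j./2).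

Lemma set_mass_ge0 q : 0 <= set_mass q.
Proof. by apply: sumr_ge0 => i _; apply: prefix_mass_ge0. Qed.

Lemma capped_mass_le1 q : capped_mass q <= 1.
Proof. by rewrite ge_min lexx. Qed.

Lemma capped_mass_le_set_mass q : capped_mass q <= set_mass q.
Proof. by rewrite ge_min lexx orbT. Qed.

Lemma capped_mass_ge0 q : 0 <= capped_mass q.
Proof. by rewrite le_min ler01 set_mass_ge0. Qed.

Lemma capped_mass0 : capped_mass 0 = 0.
Proof.
have set_mass0 : set_mass 0 = 0.
  by rewrite /set_mass big1 // => i _; rewrite /prefix_mass big_pred0.
by apply/eqP; rewrite eq_le capped_mass_ge0 andbT -set_mass0 capped_mass_le_set_mass.
Qed.

Lemma potential_ge0 k : 0 <= potential k.
Proof.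
by rewrite mulr_ge0 // sumr_ge0 // => j _; rewrite subr_ge0 capped_mass_le1.
Qed.

Lemma potentialS k : (k < n)%N ->
  potential k = potential k.+1 + 2 * (1 - capped_mass k./2).
Proof. by move=> lt_kn; rewrite /potential big_ltn //; ring. Qed.

Lemma hit_probability_ge (o : seq 'I_n) : ~~ has [in S] o -> (size o < n)%N ->
  capped_mass (size o)./2 / (size o)./2%:R <= \sum_(i in S) rounding_weight o i.
Proof.
move=> miss lt_on; set q := (size o)./2.
have unopenedS i : i \in S -> i \notin o.
  by move=> iS; apply: contra miss => io; apply/hasP; exists i.
have set_mass_le : set_mass q <= unopened_mass o.
  rewrite /set_mass /unopened_mass big_mkcond [X in _ <= X]big_mkcond /=.
  apply: ler_sum => i _; case: ifP => [/unopenedS -> // | _].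
  by case: ifP => _; rewrite ?prefix_mass_ge0.
have PS_ge0 : 0 <= \sum_(i in S) rounding_weight o i.
  by apply: sumr_ge0 => i _; apply: rounding_weight_ge0.
have [Z_gt0 | Z_le0] := ltP 0 (unopened_mass o); last first.
  apply: le_trans PS_ge0; rewrite mulr_le0_ge0 ?invr_ge0 //.
  exact: le_trans (capped_mass_le_set_mass _) (le_trans set_mass_le Z_le0).
have -> : \sum_(i in S) rounding_weight o i = set_mass q / unopened_mass o.
  rewrite /set_mass mulr_suml; apply: eq_bigr => i iS.
  by rewrite /rounding_weight (negbTE (unopenedS i iS)) Z_gt0.
have [-> | q_gt0] := posnP q; first by rewrite invr0 mulr0 divr_ge0 ?set_mass_ge0 ?ltW.
apply: (le_trans (y := set_mass q / q%:R)).
  by rewrite ler_wpM2r ?invr_ge0 ?capped_mass_le_set_mass.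
by rewrite ler_wpM2l ?set_mass_ge0 // lef_pV2 ?posrE ?ltr0n // unopened_mass_le.
Qed.

Lemma capped_mass_half_le k :
  2 * capped_mass k./2 <= k.+1%:R * (capped_mass k./2 / k./2%:R).
Proof.
have [-> | q_gt0] := posnP k./2; first by rewrite capped_mass0 mul0r !mulr0.
rewrite mulrCA (mulrC 2) ler_wpM2l ?capped_mass_ge0 //.
by rewrite ler_pdivlMr ?ltr0n // -natrM ler_nat -divn2; lia.
Qed.

Lemma potential_step k (p : R) : (k < n)%N ->
  capped_mass k./2 / k./2%:R <= p ->
  p * k.+1%:R + (1 - p) * (2 * k.+1%:R + potential k.+1)
    <= 2 * k%:R + potential k.
Proof.
move=> lt_kn lam_le; have lam2 := capped_mass_half_le k.
set lam := capped_mass k./2 / k./2%:R in lam_le lam2.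
have lam_ge0 : 0 <= lam by rewrite divr_ge0 ?capped_mass_ge0.
have P_ge0 := potential_ge0 k.+1.
have lam_p : lam * (k.+1%:R + potential k.+1) <= p * (k.+1%:R + potential k.+1).
  by rewrite ler_wpM2r ?addr_ge0.
have := mulr_ge0 lam_ge0 P_ge0.
rewrite (potentialS lt_kn) -natr1 in lam_p lam2 *.
lra.
Qed.

Lemma expected_cost_miss r (o : seq 'I_n) : (0 < n)%N -> uniq o ->
  (size o + r = n)%N -> ~~ has [in S] o ->
  expected_cost (sampled_order rounding_weight r o) S
    <= 2 * (size o)%:R + potential (size o).
Proof.
move=> n_gt0; elim: r o => [|r IH] o uo so miss.
  rewrite addn0 in so; rewrite expected_cost_sampled_order0 so.
  have le_cost : (open_cost (perm_of_seq o) S)%:R <= n.+1%:R :> R.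
    by rewrite ler_nat open_cost_le.
  have le_2n : n.+1%:R <= 2 * n%:R :> R.
    by rewrite -[2 * _]natrM ler_nat; lia.
  by have := potential_ge0 n; lra.
set k := size o; have lt_kn : (k < n)%N by lia.
pose B i := if i \in S then k.+1%:R else 2 * k.+1%:R + potential k.+1.
apply: (le_trans (expected_cost_sampled_orderS_le
  rounding_weight_ge0 rounding_weight_opened (B := B) _)).
  move=> i io; have uoi : uniq (rcons o i) by rewrite rcons_uniq io uo.
  have sizei : (size (rcons o i) + r = n)%N by rewrite size_rcons; lia.
  rewrite /B; case: ifP => iS.
    have hit : has [in S] (rcons o i) by rewrite has_rcons /= iS.
    apply: le_trans (expected_cost_sampled_order_hit rounding_weight_ge0
      rounding_weight_sum1 rounding_weight_opened uoi sizei hit) _.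
    by rewrite -cats1 find_cat (negbTE miss) /= iS addn0.
  by rewrite -/k -(size_rcons o i) IH // has_rcons /= iS.
rewrite (bigID [in S]) /=.
under [X in X + _]eq_bigr => i iS do rewrite /B iS.
under [X in _ + X]eq_bigr => i /negbTE iS do rewrite /B iS.
have := rounding_weight_sum1 lt_kn; rewrite (bigID [in S]) /= -!mulr_suml.
move/(canRL (addKr _)) => ->; rewrite (addrC (- _) 1).
exact/potential_step/hit_probability_ge.
Qed.

Lemma potential0_le : potential 0 <= 4 * \sum_(s < n) (1 - capped_mass s).
Proof.
have f_ge0 j : 0 <= 1 - capped_mass j by rewrite subr_ge0 capped_mass_le1.
apply: (le_trans (y := 2 * \sum_(0 <= j < n.*2) (1 - capped_mass j./2))).
  rewrite ler_wpM2l // [X in _ <= X](@big_cat_nat _ _ _ n) //=.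
    by rewrite lerDl sumr_ge0.
  by rewrite -addnn leq_addr.
rewrite (sumr_halfn (fun s => 1 - capped_mass s)) big_mkord mulr2n; lra.
Qed.

(* The LP objective equals the sum over [s] of the LP mass placed at times
   [>= s], and the mass placed before [s] is at most [capped_mass s]. *)
Lemma lp_obj_ge z : lp_feasible x S z ->
  \sum_(s < n) (1 - capped_mass s) <= lp_obj z.
Proof.
case=> z_ge0 [z_sum1 [z_le_x z_offS]].
pose zeta t := \sum_i z i t.
have zeta_sum1 : \sum_t zeta t = 1 by rewrite exchange_big.
have head_le s : \sum_(t < n | (t < s)%N) zeta t <= capped_mass s.
  rewrite le_min; apply/andP; split.
    rewrite -zeta_sum1 [X in _ <= X](bigID (fun t : 'I_n => (t < s)%N)) /= lerDl.
    by apply: sumr_ge0 => t _; apply: sumr_ge0.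
  rewrite /set_mass /prefix_mass [X in _ <= X]exchange_big /=; apply: ler_sum => t _.
  rewrite [X in _ <= X]big_mkcond /=; apply: ler_sum => i _.
  by case: ifP => iS; rewrite ?z_le_x ?z_offS ?iS.
have -> : lp_obj z = \sum_(s < n) \sum_(t < n | (s <= t)%N) zeta t.
  rewrite -sumr_tails /lp_obj exchange_big; apply: eq_bigr => t _.
  by rewrite -[RHS]mulr_natl mulr_sumr.
apply: ler_sum => s _; move: zeta_sum1 (head_le s).
rewrite (bigID (fun t : 'I_n => (t < s)%N)) /=.
under [X in _ + X]eq_bigl do rewrite -leqNgt.
lra.
Qed.

Lemma gbar_ge : S != finset.set0 -> \sum_(s < n) (1 - capped_mass s) <= gbar x S.
Proof.
case/set0Pn => i0 i0S; apply: lb_le_inf; last by move=> _ [z ? <-]; apply: lp_obj_ge.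
pose z0 : 'M[R]_n := \matrix_(i, t) (if i == i0 then x i t else 0).
have z0E i t : z0 i t = if i == i0 then x i t else 0 by rewrite mxE.
exists (lp_obj z0), z0 => //; split; [|split; [|split]].
- by move=> i t; rewrite z0E; case: ifP.
- rewrite (bigD1 i0) //= [X in _ + X]big1 ?addr0; last first.
    by move=> i /negbTE ne; apply: big1 => t _; rewrite z0E ne.
  by under eq_bigr do rewrite z0E eqxx; apply: x_row1.
- by move=> i t; rewrite z0E; case: ifP.
- by move=> i t iS; rewrite z0E; case: eqP => // ei; rewrite ei i0S in iS.
Qed.

End Rounding.

Theorem corollaryC3 (R : realType) (n : nat) :
  exists round : 'M[R]_n -> {ffun {perm 'I_n} -> R},
    forall x : 'M[R]_n, doubly_stochastic x ->
      is_distr (round x) /\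
      forall S : {set 'I_n}, S != finset.set0 ->
        expected_cost (round x) S <= 4 * gbar x S.
Proof.
exists (fun x => sampled_order (rounding_weight x) n [::]).
move=> x [x_ge0 [x_row1 x_col1]]; split.
  split=> [s|]; first exact/sampled_order_ge0/rounding_weight_ge0.
  by rewrite sampled_order_sum1 //; apply: rounding_weight_sum1.
move=> S S_neq0; have [i0 _] := set0Pn _ S_neq0.
have n_gt0 : (0 < n)%N by apply: leq_ltn_trans (ltn_ord i0).
apply: le_trans (expected_cost_miss x_ge0 x_col1 (o := [::]) n_gt0 _ _ _) _ => //.
rewrite mulr0 add0r; apply: le_trans (potential0_le x S) _.
by rewrite ler_wpM2l // gbar_ge.
Qed.
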